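(* In the biased planner's myopic problem described in the context, for every $b\in[0,1-p)$, $\pi^0_B(b)\in\{p,1-b\}$.
   Context: A binary state $\omega\in\{G,B\}$; for an agent with public belief $b$ and private signal precision $q\in[0.5,1]$ (signal matches $\omega$ with probability $q$), the action is the signal if $1-q\le b\le q$, $G$ if $b>q$, $B$ if $b<1-q$. Let $z(b,q)=b+q-2bq$. The biased planner has baseline precision $p\in[0.5,1)$, cost $\beta:[0,1]\to[0,\infty)$ non-negative, increasing, continuous, concave with $\beta(0)=0$, and $C>0$; its instantaneous reward is $r_B(b,q)=-\beta(|q-p|)-Cz(b,q)$ if $q\ge\max(b,1-b)$, $-\beta(|q-p|)-C$ if $b<1-q$, and $-\beta(|q-p|)$ if $b>q$. The myopic optimal precision $\pi^0_B(b)$ is a maximizer of $q\mapsto r_B(b,q)$ over $[0.5,1]$. *)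

From Stdlib Require Export Reals Lra.
Open Scope R_scope.

Definition z (b q : R) : R := b + q - 2 * b * q.

(* For q in [0.5,1] the three
   cases of the paper (b < 1-q ; b > q ; 1-q <= b <= q) are disjoint and
   exhaustive, so this case split agrees with the paper's definition. *)
Definition r_B (beta : R -> R) (p C b q : R) : R :=
  if Rlt_dec b (1 - q) then - beta (Rabs (q - p)) - C
  else if Rlt_dec q b then - beta (Rabs (q - p))
  else - beta (Rabs (q - p)) - C * z b q.

Definition cost_ok (beta : R -> R) : Prop :=
  beta 0 = 0 /\
  (forall x, 0 <= x <= 1 -> 0 <= beta x) /\
  (forall x y, 0 <= x <= 1 -> 0 <= y <= 1 -> x < y -> beta x < beta y) /\
  (forall x, 0 <= x <= 1 -> forall eps, 0 < eps -> exists delta, 0 < delta /\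
     forall y, 0 <= y <= 1 -> Rabs (y - x) < delta -> Rabs (beta y - beta x) < eps) /\
  (forall x y t, 0 <= x <= 1 -> 0 <= y <= 1 -> 0 <= t <= 1 ->
     t * beta x + (1 - t) * beta y <= beta (t * x + (1 - t) * y)).

Definition myopic_opt (beta : R -> R) (p C b q : R) : Prop :=
  1/2 <= q <= 1 /\
  forall q', 1/2 <= q' <= 1 -> r_B beta p C b q' <= r_B beta p C b q.

(* When q < 1 - b the agent ignores its signal and plays B, so the planner loses
   C whatever the precision and only the cost beta(|q - p|) matters: this forces
   q = p.  When q >= 1 - b the agent follows its signal; since p <= 1 - b and
   b <= 1/2, both the cost and the error probability z(b, q) grow with q on
   [1 - b, 1], so no q > 1 - b is optimal. *)
From Stdlib Require Import Reals Lra.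
Open Scope R_scope.

Lemma r_B_below (beta : R -> R) (p C b q : R) :
  b < 1 - q -> r_B beta p C b q = - beta (Rabs (q - p)) - C.
Proof.
  intros Hb; unfold r_B.
  destruct (Rlt_dec b (1 - q)); [reflexivity | lra].
Qed.

Lemma r_B_between (beta : R -> R) (p C b q : R) :
  1 - q <= b <= q -> r_B beta p C b q = - beta (Rabs (q - p)) - C * z b q.
Proof.
  intros Hb; unfold r_B.
  destruct (Rlt_dec b (1 - q)); [lra |].
  destruct (Rlt_dec q b); [lra | reflexivity].
Qed.

Lemma z_le_compat_r (b q1 q2 : R) : b <= 1/2 -> q1 <= q2 -> z b q1 <= z b q2.
Proof.
  intros Hb Hq; unfold z.
  assert (0 <= (q2 - q1) * (1 - 2 * b)) by (apply Rmult_le_pos; lra).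
  nra.
Qed.

Section MyopicOptimum.

Variable beta : R -> R.
Hypothesis beta_ok : cost_ok beta.

Lemma cost_lt (x y : R) : 0 <= x <= 1 -> 0 <= y <= 1 -> x < y -> beta x < beta y.
Proof. destruct beta_ok as [_ [_ [Hinc _]]]; apply Hinc. Qed.

Lemma cost_gt0 (x : R) : 0 < x <= 1 -> 0 < beta x.
Proof.
  intros Hx; destruct beta_ok as [H0 _].
  rewrite <- H0; apply cost_lt; lra.
Qed.

Lemma myopic_opt_eq_baseline (p C b q : R) :
  1/2 <= p <= 1 -> b < 1 - p -> myopic_opt beta p C b q -> b < 1 - q -> q = p.
Proof.
  intros Hp Hbp [Hq Hopt] Hbq.
  assert (Hle := Hopt p ltac:(lra)).
  rewrite r_B_below in Hle by exact Hbp.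
  rewrite r_B_below, Rminus_diag, Rabs_R0 in Hle by exact Hbq.
  destruct beta_ok as [H0 _]; rewrite H0 in Hle.
  destruct (Req_dec q p) as [Heq | Hneq]; [exact Heq | exfalso].
  assert (0 < beta (Rabs (q - p))).
  { apply cost_gt0; split; [apply Rabs_pos_lt; lra | apply Rabs_le; lra]. }
  lra.
Qed.

Lemma myopic_opt_le_threshold (p C b q : R) :
  0 < C -> 0 <= b <= 1/2 -> 0 <= p <= 1 - b ->
  myopic_opt beta p C b q -> q <= 1 - b.
Proof.
  intros HC Hb Hp [Hq Hopt].
  destruct (Rle_lt_dec q (1 - b)) as [Hle | Hgt]; [exact Hle | exfalso].
  assert (Hcmp := Hopt (1 - b) ltac:(lra)).
  rewrite (r_B_between _ _ _ _ q), (r_B_between _ _ _ _ (1 - b)) in Hcmp by lra.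
  rewrite (Rabs_right (q - p)), (Rabs_right (1 - b - p)) in Hcmp by lra.
  assert (beta (1 - b - p) < beta (q - p)) by (apply cost_lt; lra).
  assert (C * z b (1 - b) <= C * z b q)
    by (apply Rmult_le_compat_l; [lra | apply z_le_compat_r; lra]).
  lra.
Qed.

End MyopicOptimum.

Theorem lemma11 (beta : R -> R) (p C b q : R) :
  1/2 <= p < 1 -> 0 < C -> cost_ok beta ->
  0 <= b < 1 - p ->
  myopic_opt beta p C b q ->
  q = p \/ q = 1 - b.
Proof.
  intros Hp HC Hbeta Hb Hopt.
  destruct (Rlt_dec q (1 - b)) as [Hlt | Hge].
  - left; exact (myopic_opt_eq_baseline beta Hbeta p C b q
                   ltac:(lra) ltac:(lra) Hopt ltac:(lra)).
  - right; apply Rle_antisym; [| lra].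
    exact (myopic_opt_le_threshold beta Hbeta p C b q
             HC ltac:(lra) ltac:(lra) Hopt).
Qed.
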